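(* Let $\{a_n\}_{n\in\mathbb{N}}\subset\mathbb{R}$ be a sequence satisfying $$|a_{n+m}|\le|a_n+a_m|\quad\text{for all } n,m\in\mathbb{N} \text{ with } \tfrac12 n\le m\le 2n.$$ Then the limit $\lim_{n\to\infty}\frac{a_n}{n}$ exists and belongs to $\mathbb{R}$.
   Context: $\mathbb{N}=\{1,2,3,\dots\}$. *)

From Stdlib Require Import Reals.
Open Scope R_scope.

From Stdlib Require Import Reals Lra Lia Psatz Arith Classical.
Open Scope R_scope.

(* Since |a n + a m| <= |a n| + |a m|, the sequence |a| is subadditive on pairs
   with n/2 <= m <= 2n, and this suffices for Fekete's argument: writing
   n = k N + r and splitting k N into two nearly equal multiples of N gives
   |a n|/n <= |a N|/N + O(N/n), so |a n|/n converges to l = inf |a N|/N.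
   If l > 0, consecutive terms eventually have the same sign, for otherwise
   |a (2k+1)| <= max (|a k|, |a (k+1)|) would be about l k although it is about
   2 l k; hence a n / n converges to l or to -l. *)

Lemma Un_cv_of_eventually_le_terms (u : nat -> R) (lo : R) :
  (forall n, lo <= u n) ->
  (forall N eps, 0 < eps -> exists M, forall n, (M <= n)%nat -> u n <= u N + eps) ->
  exists l, lo <= l /\ Un_cv u l.
Proof.
  intros Hlo Hev.
  set (E := fun x => exists n, x = - u n).
  assert (HEub : is_upper_bound E (- lo))
    by (intros x [n ->]; specialize (Hlo n); lra).
  destruct (completeness E (ex_intro _ _ HEub) (ex_intro _ _ (ex_intro _ 0%nat eq_refl)))
    as [m [Hub Hlub]].
  assert (Hinf : forall n, - m <= u n)
    by (intro n; enough (- u n <= m) by lra; apply Hub; exists n; reflexivity).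
  assert (Happrox : forall eps, 0 < eps -> exists N, u N < - m + eps).
  { intros eps Heps; apply NNPP; intro Hno.
    enough (m <= m - eps) by lra.
    apply Hlub; intros x [n ->].
    enough (~ u n < - m + eps) by lra.
    intro Hn; apply Hno; exists n; exact Hn. }
  exists (- m); split.
  { enough (m <= - lo) by lra. apply Hlub, HEub. }
  intros eps Heps.
  destruct (Happrox (eps / 2) ltac:(lra)) as [N HN].
  destruct (Hev N (eps / 2) ltac:(lra)) as [M HM].
  exists M; intros n Hn; unfold R_dist.
  specialize (HM n Hn); specialize (Hinf n).
  rewrite Rabs_right; lra.
Qed.

Lemma eventually_div_INR_le (c eps : R) : 0 < eps ->
  exists M, forall n, (M <= n)%nat -> c / INR (S n) <= eps.
Proof.
  intro Heps.
  destruct (INR_unbounded (c / eps)) as [M HM].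
  exists M; intros n Hn.
  assert (HMn : INR M <= INR (S n)) by (apply le_INR; lia).
  assert (Hc : c = c / eps * eps) by (field; lra).
  apply Rmult_le_reg_r with (INR (S n)); [apply lt_0_INR; lia|].
  replace (c / INR (S n) * INR (S n)) with c by (field; apply not_0_INR; lia).
  nra.
Qed.

Section RestrictedSubadditivity.

Variable b : nat -> R.
Hypothesis b_restricted_subadd : forall n m : nat, (1 <= n)%nat -> (1 <= m)%nat ->
  (n <= 2 * m)%nat -> (m <= 2 * n)%nat -> b (n + m)%nat <= b n + b m.
Hypothesis b_ge0 : forall n, 0 <= b n.

Lemma restricted_subadd_mul_add N k r : (1 <= N)%nat -> (1 <= k)%nat -> (r < N)%nat ->
  b (k * N + r)%nat + b N <= INR k * b N + b (N + r)%nat.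
Proof.
  intros HN; revert r; induction k as [k IH] using lt_wf_ind; intros r Hk Hr.
  destruct (Nat.eq_dec k 1) as [->|Hk1].
  { rewrite Nat.mul_1_l, Nat.add_comm; simpl; lra. }
  assert (Hsplit : exists j j', k = (j + j')%nat /\ (1 <= j <= j')%nat /\ (j' <= j + 1)%nat).
  { destruct (Nat.Even_or_Odd k) as [[j Hj]|[j Hj]];
      [exists j, j | exists j, (j + 1)%nat]; lia. }
  destruct Hsplit as [j [j' [-> [Hj Hj']]]].
  assert (IHj : b (j * N + r)%nat + b N <= INR j * b N + b (N + r)%nat) by (apply IH; lia).
  assert (IHj' : b (j' * N + 0)%nat + b N <= INR j' * b N + b (N + 0)%nat) by (apply IH; lia).
  rewrite !Nat.add_0_r in IHj'.
  assert (Hsub : b ((j + j') * N + r)%nat <= b (j * N + r)%nat + b (j' * N)%nat).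
  { replace ((j + j') * N + r)%nat with (j * N + r + j' * N)%nat by ring.
    apply b_restricted_subadd; nia. }
  rewrite plus_INR; lra.
Qed.

Lemma restricted_subadd_linear_bound n : (1 <= n)%nat -> b n <= INR n * b 1%nat.
Proof.
  intro Hn.
  pose proof (restricted_subadd_mul_add 1 n 0 (le_n 1) Hn (Nat.lt_0_1)) as H.
  rewrite Nat.mul_1_r, !Nat.add_0_r in H; lra.
Qed.

Lemma restricted_subadd_ratio_le N n : (1 <= N)%nat -> (N <= n)%nat ->
  b n / INR n <= b N / INR N + 2 * INR N * b 1%nat / INR n.
Proof.
  intros HN Hn.
  pose proof (Nat.div_mod n N ltac:(lia)) as Hdiv.
  pose proof (Nat.mod_upper_bound n N ltac:(lia)) as Hr.
  set (k := (n / N)%nat) in *; set (r := (n mod N)%nat) in *.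
  assert (Hk : (1 <= k)%nat) by (destruct k; lia).
  pose proof (restricted_subadd_mul_add N k r HN Hk Hr) as Hmul.
  replace (k * N + r)%nat with n in Hmul by lia.
  pose proof (restricted_subadd_linear_bound (N + r) ltac:(lia)) as Hlin.
  assert (HNr : INR (N + r) <= 2 * INR N)
    by (replace (2 * INR N) with (INR (N + N)) by (rewrite plus_INR; ring);
        apply le_INR; lia).
  assert (HkN : INR k * INR N <= INR n) by (rewrite <- mult_INR; apply le_INR; lia).
  assert (HN0 : 0 < INR N) by (apply lt_0_INR; lia).
  assert (Hn0 : 0 < INR n) by (apply lt_0_INR; lia).
  pose proof (b_ge0 N); pose proof (b_ge0 1%nat).
  assert (HkbN : INR k * b N <= INR n * (b N / INR N)).
  { replace (INR k * b N) with (INR k * INR N * (b N / INR N)) by (field; lra).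
    apply Rmult_le_compat_r; [apply Rle_mult_inv_pos|]; lra. }
  apply Rmult_le_reg_r with (INR n); [lra|].
  replace (b n / INR n * INR n) with (b n) by (field; lra).
  replace ((b N / INR N + 2 * INR N * b 1%nat / INR n) * INR n)
    with (INR n * (b N / INR N) + 2 * INR N * b 1%nat) by (field; lra).
  nra.
Qed.

Lemma restricted_subadd_ratio_cv :
  exists l, 0 <= l /\ Un_cv (fun k => b (S k) / INR (S k)) l.
Proof.
  apply Un_cv_of_eventually_le_terms.
  { intro n; apply Rle_mult_inv_pos; [apply b_ge0 | apply lt_0_INR; lia]. }
  intros N eps Heps.
  destruct (eventually_div_INR_le (2 * INR (S N) * b 1%nat) eps Heps) as [M HM].
  exists (Nat.max M N); intros n Hn.
  pose proof (restricted_subadd_ratio_le (S N) (S n) ltac:(lia) ltac:(lia)) as Hle.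
  specialize (HM n ltac:(lia)); lra.
Qed.

End RestrictedSubadditivity.

Lemma Rabs_add_opp_sign (p q : R) : p * q <= 0 -> Rabs (p + q) <= Rmax (Rabs p) (Rabs q).
Proof.
  intro Hpq; unfold Rmax; destruct (Rle_dec _ _); split_Rabs; nra.
Qed.

Lemma Un_cv_ratio_linear_bounds (v : nat -> R) (l eps : R) :
  Un_cv (fun k => v (S k) / INR (S k)) l -> 0 < eps ->
  exists M, forall n, (M < n)%nat -> (l - eps) * INR n < v n < (l + eps) * INR n.
Proof.
  intros Hcv Heps.
  destruct (Hcv eps Heps) as [M HM].
  exists M; intros [|n] Hn; [lia|].
  specialize (HM n ltac:(lia)); unfold R_dist in HM.
  apply Rabs_def2 in HM.
  assert (Hn0 : 0 < INR (S n)) by (apply lt_0_INR; lia).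
  replace (v (S n)) with (v (S n) / INR (S n) * INR (S n)) by (field; lra).
  split; nra.
Qed.

Lemma eventually_constant_sign (u : nat -> R) (M : nat) :
  (forall k, (M <= k)%nat -> 0 < u k * u (S k)) ->
  exists s, Rabs s = 1 /\ forall k, (M <= k)%nat -> u k = s * Rabs (u k).
Proof.
  intro Hsame_sign.
  assert (Hsame : forall j, 0 < u M * u (M + j)%nat).
  { induction j as [|j IHj].
    - rewrite Nat.add_0_r; pose proof (Hsame_sign M (le_n M)); nra.
    - pose proof (Hsame_sign (M + j)%nat ltac:(lia)) as Hj.
      rewrite Nat.add_succ_r.
      assert (0 < (u M * u (M + j)%nat) * (u (M + j)%nat * u (S (M + j))))
        by (apply Rmult_lt_0_compat; assumption).
      nra. }
  destruct (Rle_lt_dec 0 (u M)) as [HM|HM]; [exists 1 | exists (-1)];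
    (split; [split_Rabs; lra|]);
    intros k Hk; pose proof (Hsame (k - M)%nat) as Hk';
    replace (M + (k - M))%nat with k in Hk' by lia;
    split_Rabs; nra.
Qed.

Lemma Un_cv_of_abs_signed (u : nat -> R) (l s : R) (M : nat) :
  Rabs s = 1 -> (forall k, (M <= k)%nat -> u k = s * Rabs (u k)) ->
  Un_cv (fun k => Rabs (u k)) l -> Un_cv u (s * l).
Proof.
  intros Hs Hsign Hcv eps Heps.
  destruct (Hcv eps Heps) as [N HN].
  exists (Nat.max M N); intros n Hn; unfold R_dist in *.
  rewrite (Hsign n ltac:(lia)).
  replace (s * Rabs (u n) - s * l) with (s * (Rabs (u n) - l)) by ring.
  rewrite Rabs_mult, Hs, Rmult_1_l.
  apply HN; lia.
Qed.

Lemma Un_cv_0_of_abs (u : nat -> R) : Un_cv (fun k => Rabs (u k)) 0 -> Un_cv u 0.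
Proof.
  intros Hcv eps Heps.
  destruct (Hcv eps Heps) as [N HN].
  exists N; intros n Hn; specialize (HN n Hn); unfold R_dist in *.
  rewrite Rminus_0_r, Rabs_Rabsolu in HN; rewrite Rminus_0_r; exact HN.
Qed.

Lemma consecutive_terms_same_sign (a : nat -> R) (l : R)
  (ha : forall n m : nat, (1 <= n)%nat -> (1 <= m)%nat ->
        (n <= 2 * m)%nat -> (m <= 2 * n)%nat ->
        Rabs (a (n + m)%nat) <= Rabs (a n + a m)) :
  0 < l ->
  Un_cv (fun k => Rabs (a (S k)) / INR (S k)) l ->
  exists M, forall k, (M <= k)%nat -> 0 < a k * a (S k).
Proof.
  intros Hl Hcv.
  destruct (Un_cv_ratio_linear_bounds (fun n => Rabs (a n)) l (l / 4) Hcv ltac:(lra))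
    as [M HM].
  exists (M + 3)%nat; intros k Hk.
  apply Rnot_le_lt; intro Hopp.
  pose proof (ha k (S k) ltac:(lia) ltac:(lia) ltac:(lia) ltac:(lia)) as Hsum.
  pose proof (Rabs_add_opp_sign _ _ Hopp) as Hmax.
  pose proof (HM k ltac:(lia)) as Hk0.
  pose proof (HM (S k) ltac:(lia)) as Hk1.
  pose proof (HM (k + S k)%nat ltac:(lia)) as Hk2.
  assert (Hk3 : 3 <= INR k) by (replace 3 with (INR 3) by (simpl; ring); apply le_INR; lia).
  rewrite plus_INR, S_INR in *.
  assert (Rmax (Rabs (a k)) (Rabs (a (S k))) < (l + l / 4) * (INR k + 1))
    by (apply Rmax_lub_lt; nra).
  nra.
Qed.

Theorem mainTheorem5 (a : nat -> R)
  (ha : forall n m : nat, (1 <= n)%nat -> (1 <= m)%nat ->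
        (n <= 2 * m)%nat -> (m <= 2 * n)%nat ->
        Rabs (a (n + m)%nat) <= Rabs (a n + a m)) :
  exists L : R, Un_cv (fun k : nat => a (S k) / INR (S k)) L.
Proof.
  assert (Habs : forall n m : nat, (1 <= n)%nat -> (1 <= m)%nat ->
            (n <= 2 * m)%nat -> (m <= 2 * n)%nat ->
            Rabs (a (n + m)%nat) <= Rabs (a n) + Rabs (a m))
    by (intros; eapply Rle_trans; [apply ha; assumption | apply Rabs_triang]).
  destruct (restricted_subadd_ratio_cv _ Habs (fun n => Rabs_pos (a n))) as [l [Hl0 Hcv]].
  set (u := fun k => a (S k) / INR (S k)).
  assert (Habs_u : forall k, Rabs (u k) = Rabs (a (S k)) / INR (S k)).
  { intro k; unfold u, Rdiv.
    rewrite Rabs_mult, Rabs_inv, (Rabs_pos_eq (INR (S k))) by apply pos_INR.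
    reflexivity. }
  assert (Hcv_u : Un_cv (fun k => Rabs (u k)) l)
    by (apply Un_cv_ext with (2 := Hcv); intro k; symmetry; apply Habs_u).
  destruct (Rle_lt_or_eq_dec _ _ Hl0) as [Hl | <-].
  - destruct (consecutive_terms_same_sign a l ha Hl Hcv) as [M HM].
    destruct (eventually_constant_sign a M HM) as [s [Hs Hsign]].
    exists (s * l); apply (Un_cv_of_abs_signed u l s M Hs); [|exact Hcv_u].
    intros k Hk; rewrite Habs_u; unfold u, Rdiv.
    rewrite (Hsign (S k) ltac:(lia)) at 1; ring.
  - exists 0; apply Un_cv_0_of_abs, Hcv_u.
Qed.
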